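(* Let $a\in\mathbb{R}$ and $w\in\mathbb{C}\setminus\mathbb{R}$ with $(a,w)\in D_c$, and suppose $\varphi := |\operatorname{Arg}(w)| \in (0,\pi/2]$. Then $\tau_c(a,w) > 1$ if and only if $a > 0$ and $|w| < R(-a;\varphi)$.
   Context: $\operatorname{Arg}(w)\in(-\pi,\pi]$ is the principal argument; $\arccos:[-1,1]\to[0,\pi]$. $D_c := \{(a,w)\in\mathbb{R}\times(\mathbb{C}\setminus\{0\}) : \operatorname{Re}(w)<a<|w|\}$ and for $(a,w)\in D_c$, $\tau_c(a,w) := \frac{1}{\sqrt{|w|^2-a^2}}[|\operatorname{Arg}(w)| - \arccos(a/|w|)]$. For $\varphi\in(0,\pi/2]$, $C(\theta;\varphi) := \theta\cot(\theta-\varphi)$ is a strictly decreasing bijection from $[0,\varphi)$ onto $(-\infty,0]$ with inverse $C^{-1}(\cdot;\varphi)$, and $R(r;\varphi) := -C^{-1}(r;\varphi)/\sin(C^{-1}(r;\varphi)-\varphi)$ for $r\le 0$. *)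

From Stdlib Require Import Reals ClassicalEpsilon.
From Coquelicot Require Import Coquelicot.
Open Scope R_scope.

Definition Arg (w : C) : R :=
  if Rle_dec 0 (Im w) then acos (Re w / Cmod w) else - acos (Re w / Cmod w).

Definition D_c (a : R) (w : C) : Prop := w <> 0%C /\ Re w < a /\ a < Cmod w.

Definition tau_c (a : R) (w : C) : R :=
  / sqrt (Cmod w ^ 2 - a ^ 2) * (Rabs (Arg w) - acos (a / Cmod w)).

Definition Cfun (theta phi : R) : R := theta * (cos (theta - phi) / sin (theta - phi)).

(* Inverse of C(.;phi) : [0,phi) -> (-oo,0], chosen by Hilbert's epsilon
   (the bijection property is the paper's standing fact). *)
Definition Cinv (r phi : R) : R :=
  epsilon (inhabits 0) (fun theta => 0 <= theta < phi /\ Cfun theta phi = r).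

Definition Rfun (r phi : R) : R :=
  - Cinv r phi / sin (Cinv r phi - phi).

(* Write rho = |w| and phi = |Arg w| in (0, pi/2], so that Re w = rho cos phi.
   The hypothesis Re w < a < rho forces a > 0 and a = rho cos alpha with
   alpha = arccos(a/rho) in (0, phi); moreover tau_c(a,w) = (phi - alpha) /
   (rho sin alpha).  Everything is then governed by the "balance" function
       bal(x) = (phi - x) cos x - a sin x,
   which is strictly decreasing on [0, phi] and changes sign there, so it has
   a unique zero beta in (0, pi/2).  The equation C(theta; phi) = -a for
   theta in [0, phi) is exactly bal(phi - theta) = 0, hence
   C^{-1}(-a; phi) = phi - beta and R(-a; phi) = (phi - beta) / sin beta.
   Both conditions of the theorem are then shown equivalent to alpha < beta:
   tau_c > 1 iff bal(alpha) > 0, and rho < R(-a; phi) iff cos beta < cos alpha. *)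

From Pilot Require Import Defs.
From Stdlib Require Import Reals Lra Psatz ClassicalEpsilon.
From Coquelicot Require Import Coquelicot.
Open Scope R_scope.

Lemma cos_lt_cos_iff (x y : R) :
  0 <= x <= PI -> 0 <= y <= PI -> (cos x < cos y <-> y < x).
Proof.
  intros Hx Hy; split; intros H.
  - apply cos_decreasing_0; lra.
  - apply cos_decreasing_1; lra.
Qed.

Lemma lt_div_iff (x y p : R) : 0 < p -> (x < y / p <-> x * p < y).
Proof.
  intros Hp; split; intros H.
  - apply (Rmult_lt_compat_r p) in H; [|exact Hp].
    unfold Rdiv in H; rewrite Rmult_assoc, Rinv_l, Rmult_1_r in H by lra.
    exact H.
  - apply (Rmult_lt_reg_r p); [exact Hp|].
    unfold Rdiv; rewrite Rmult_assoc, Rinv_l, Rmult_1_r by lra.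
    exact H.
Qed.

Lemma cos_acos_ratio (x r : R) :
  0 < r -> -r <= x <= r -> cos (acos (x / r)) = x / r.
Proof.
  intros Hr Hx; apply cos_acos.
  split; apply (Rmult_le_reg_r r); try lra;
    unfold Rdiv; rewrite Rmult_assoc, Rinv_l; lra.
Qed.

Lemma Rabs_Arg (w : C) : Rabs (Arg w) = acos (Re w / Cmod w).
Proof.
  unfold Arg.
  pose proof (acos_bound (Re w / Cmod w)).
  destruct (Rle_dec 0 (Im w)).
  - apply Rabs_right; lra.
  - rewrite Rabs_Ropp; apply Rabs_right; lra.
Qed.

Lemma Re_polar (w : C) : w <> 0%C -> Re w = Cmod w * cos (Rabs (Arg w)).
Proof.
  intros Hw.
  assert (Hr : 0 < Cmod w) by (apply Cmod_gt_0; exact Hw).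
  assert (Hb : -Cmod w <= Re w <= Cmod w).
  { pose proof (re_le_Cmod w) as H; unfold Rabs in H.
    destruct (Rcase_abs (Re w)); lra. }
  rewrite Rabs_Arg, cos_acos_ratio by assumption.
  field; lra.
Qed.

Lemma sqrt_sq_diff_cos (r al : R) :
  0 <= r -> 0 <= al <= PI -> sqrt (r ^ 2 - (r * cos al) ^ 2) = r * sin al.
Proof.
  intros Hr Hal.
  assert (Hs : 0 <= sin al) by (apply sin_ge_0; lra).
  replace (r ^ 2 - (r * cos al) ^ 2) with ((r * sin al) ^ 2).
  - apply sqrt_pow2; nra.
  - pose proof (sin2_cos2 al); unfold Rsqr in *; nra.
Qed.

Lemma tau_c_trig (a : R) (w : C) :
  D_c a w ->
  tau_c a w = (Rabs (Arg w) - acos (a / Cmod w))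
              / (Cmod w * sin (acos (a / Cmod w))).
Proof.
  intros [Hw [Hre Hrho]].
  assert (Hr : 0 < Cmod w) by (apply Cmod_gt_0; exact Hw).
  assert (Hre' : - Cmod w <= Re w) by
    (pose proof (re_le_Cmod w) as H; unfold Rabs in H;
     destruct (Rcase_abs (Re w)); lra).
  assert (Ha : a = Cmod w * cos (acos (a / Cmod w)))
    by (rewrite cos_acos_ratio by lra; field; lra).
  assert (Hsqrt : sqrt (Cmod w ^ 2 - a ^ 2) = Cmod w * sin (acos (a / Cmod w))).
  { rewrite Ha at 1; apply sqrt_sq_diff_cos; [lra | apply acos_bound]. }
  unfold tau_c; rewrite Hsqrt.
  unfold Rdiv; apply Rmult_comm.
Qed.

Definition bal (phi a x : R) : R := (phi - x) * cos x - a * sin x.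

Lemma Cfun_eq_iff_bal (phi a th : R) :
  0 < phi - th < PI -> (Cfun th phi = - a <-> bal phi a (phi - th) = 0).
Proof.
  intros Hbe.
  assert (Hs : 0 < sin (phi - th)) by (apply sin_gt_0; lra).
  unfold Cfun, bal.
  replace (th - phi) with (- (phi - th)) by ring.
  replace (phi - (phi - th)) with th by ring.
  rewrite cos_neg, sin_neg.
  split; intros H.
  - assert (E : th * cos (phi - th) = a * sin (phi - th)).
    { rewrite <- (Ropp_involutive a), <- H. field; lra. }
    lra.
  - apply (Rmult_eq_reg_r (sin (phi - th))); [|lra].
    replace (th * (cos (phi - th) / - sin (phi - th)) * sin (phi - th))
      with (- (th * cos (phi - th))) by (field; lra).
    lra.
Qed.

Lemma Rfun_eq (a phi : R) :
  Rfun (- a) phi = Defs.Cinv (- a) phi / sin (phi - Defs.Cinv (- a) phi).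
Proof.
  unfold Rfun.
  replace (Defs.Cinv (- a) phi - phi) with (- (phi - Defs.Cinv (- a) phi)) by ring.
  rewrite sin_neg; unfold Rdiv; rewrite Rinv_opp; ring.
Qed.

Section Balance.

Variables phi a : R.
Hypothesis Hphi : 0 < phi <= PI / 2.
Hypothesis Ha : 0 < a.

(* bal is strictly decreasing on [0, phi]: the cosine factor decreases and
   the sine term increases. *)
Lemma bal_decreasing (x y : R) : 0 <= x -> x < y -> y <= phi -> bal phi a y < bal phi a x.
Proof.
  intros Hx Hxy Hy; unfold bal.
  pose proof PI_RGT_0 as HPI.
  assert (Hc : cos y < cos x) by (apply cos_decreasing_1; lra).
  assert (Hs : sin x < sin y) by (apply sin_increasing_1; lra).
  assert (Hcy : 0 <= cos y) by (apply cos_ge_0; lra).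
  nra.
Qed.

Lemma bal_pos_iff (x z : R) :
  0 <= x <= phi -> 0 <= z <= phi -> bal phi a z = 0 -> (0 < bal phi a x <-> x < z).
Proof.
  intros Hx Hz Hbz; split; intros H.
  - destruct (Rtotal_order x z) as [?|[Exz|Hzx]]; [assumption | |].
    + subst; lra.
    + pose proof (bal_decreasing z x); lra.
  - pose proof (bal_decreasing x z); lra.
Qed.

(* A zero of bal in [0, phi] lies strictly inside (0, pi/2), since
   bal(0) = phi > 0 and bal(pi/2) = -a < 0. *)
Lemma bal_root_bounds (z : R) : 0 <= z <= phi -> bal phi a z = 0 -> 0 < z < PI / 2.
Proof.
  intros Hz Hbz; split.
  - destruct (Req_dec z 0) as [->|]; [|lra].
    unfold bal in Hbz; rewrite cos_0, sin_0 in Hbz; lra.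
  - destruct (Req_dec z (PI / 2)) as [->|]; [|lra].
    unfold bal in Hbz; rewrite cos_PI2, sin_PI2 in Hbz; lra.
Qed.

Lemma Cfun_root_exists : exists th, 0 <= th < phi /\ Cfun th phi = - a.
Proof.
  pose proof PI_RGT_0 as HPI.
  assert (Hsphi : 0 < sin phi) by (apply sin_gt_0; lra).
  assert (Hcont : continuity (fun x => - bal phi a x)) by (unfold bal; reg).
  destruct (IVT (fun x => - bal phi a x) 0 phi Hcont) as [z [Hz Hbz]];
    [lra | unfold bal; rewrite sin_0, cos_0; lra
         | unfold bal; replace (phi - phi) with 0 by ring; nra |].
  assert (Hbz0 : bal phi a z = 0) by lra.
  pose proof (bal_root_bounds z Hz Hbz0).
  exists (phi - z); split; [lra|].
  apply Cfun_eq_iff_bal; [lra|].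
  replace (phi - (phi - z)) with z by ring; exact Hbz0.
Qed.

Lemma Cinv_spec :
  let be := phi - Defs.Cinv (- a) phi in
  be <= phi /\ 0 < be < PI / 2 /\ bal phi a be = 0.
Proof.
  pose proof (epsilon_spec (inhabits 0) _ Cfun_root_exists) as [Hth HC].
  fold (Defs.Cinv (- a) phi) in Hth, HC.
  assert (Hbal : bal phi a (phi - Defs.Cinv (- a) phi) = 0).
  { apply Cfun_eq_iff_bal; [pose proof PI_RGT_0 as HPI; lra | exact HC]. }
  pose proof (bal_root_bounds (phi - Defs.Cinv (- a) phi) ltac:(lra) Hbal).
  cbv zeta; repeat split; lra.
Qed.

End Balance.

Lemma ratio_gt_1_iff_bal (phi a rho al : R) :
  0 < rho -> 0 < al < PI / 2 -> a = rho * cos al ->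
  ((phi - al) / (rho * sin al) > 1 <-> 0 < bal phi a al).
Proof.
  intros Hr Hal Ha.
  assert (Hs : 0 < sin al) by (apply sin_gt_0; lra).
  assert (Hc : 0 < cos al) by (apply cos_gt_0; lra).
  assert (Hbal : bal phi a al = cos al * ((phi - al) - rho * sin al))
    by (unfold bal; rewrite Ha; ring).
  assert (Hp : 0 < rho * sin al) by nra.
  unfold Rgt; rewrite (lt_div_iff 1 _ _ Hp), Rmult_1_l, Hbal.
  split; intros H; nra.
Qed.

Lemma radius_lt_iff (rho a al th be : R) :
  0 < rho -> 0 <= al <= PI -> 0 < be < PI / 2 ->
  a = rho * cos al -> th * cos be = a * sin be ->
  (rho < th / sin be <-> al < be).
Proof.
  intros Hr Hal Hbe Ha Hroot.
  pose proof PI_RGT_0 as HPI.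
  assert (Hs : 0 < sin be) by (apply sin_gt_0; lra).
  assert (Hc : 0 < cos be) by (apply cos_gt_0; lra).
  assert (Hp : 0 < rho * sin be) by nra.
  rewrite <- (cos_lt_cos_iff be al) by lra.
  (* rho sin(be) < th and cos be < cos al both become, after multiplying by
     the positive factors cos be resp. rho sin be, the same inequality *)
  assert (E : th * cos be = rho * sin be * cos al) by (rewrite Hroot, Ha; ring).
  rewrite (lt_div_iff _ _ _ Hs).
  split; intros H.
  - apply (Rmult_lt_reg_l (rho * sin be)); [exact Hp | nra].
  - apply (Rmult_lt_reg_r (cos be)); [exact Hc | nra].
Qed.

Theorem mainTheorem13 (a : R) (w : C) :
  Im w <> 0 ->
  D_c a w ->
  0 < Rabs (Arg w) <= PI / 2 ->
  (tau_c a w > 1 <-> (a > 0 /\ Cmod w < Rfun (- a) (Rabs (Arg w)))).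
Proof.
  intros _ HD Hphi.
  rewrite tau_c_trig, Rfun_eq by exact HD.
  destruct HD as [Hw [Hre Hrho]].
  assert (Hr : 0 < Cmod w) by (apply Cmod_gt_0; exact Hw).
  pose proof (Re_polar w Hw) as Hpolar.
  set (rho := Cmod w) in *; set (phi := Rabs (Arg w)) in *.
  pose proof PI_RGT_0 as HPI.
  assert (Ha : 0 < a) by (assert (0 <= cos phi) by (apply cos_ge_0; lra); nra).
  (* alpha = arccos(a / rho) lies in (0, phi) because cos phi < a / rho < 1 *)
  set (al := acos (a / rho)).
  assert (Hcal : cos al = a / rho) by (apply cos_acos_ratio; lra).
  assert (Hal_rng : 0 <= al <= PI) by apply acos_bound.
  assert (Ha_eq : a = rho * cos al) by (rewrite Hcal; field; lra).
  assert (Hal0 : 0 < al) by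
    (apply (cos_lt_cos_iff al 0); [lra | lra | rewrite cos_0; nra]).
  assert (Hal_phi : al < phi) by
    (apply (cos_lt_cos_iff phi al); [lra | lra | nra]).
  destruct (Cinv_spec phi a Hphi Ha) as [Hbe_phi [Hbe Hbal]].
  set (th := Defs.Cinv (- a) phi) in *.
  rewrite (ratio_gt_1_iff_bal phi a rho al Hr ltac:(lra) Ha_eq),
          (bal_pos_iff phi a Hphi Ha al (phi - th) ltac:(lra) ltac:(lra) Hbal).
  rewrite (radius_lt_iff rho a al th (phi - th) Hr Hal_rng Hbe Ha_eq)
    by (unfold bal in Hbal; replace (phi - (phi - th)) with th in Hbal by ring; lra).
  tauto.
Qed.
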